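(* Let $\Gamma$ be a metrized graph and $p$ a vertex of $\Gamma$. For an edge $e_i$ of $\Gamma$ with end points $p_i$ and $q_i$, $$r(p_i,p)+r(q_i,p)=2\,r_{\overline{\Gamma}_i}(p,\bar p_i)+\frac{L_i R_i}{L_i+R_i}-2\,\frac{L_i R_{a_i,p} R_{b_i,p}}{R_i(L_i+R_i)}.$$
   Context: A metrized graph $\Gamma$ is a finite connected graph (multiple edges and self-loops allowed) each of whose edges is identified with a closed segment of positive length, with a finite nonempty vertex set $V(\Gamma)$ containing every point of valence $\neq2$; $L_i$ is the length of $e_i$. $r$ (resp. $r_\beta$) is the effective resistance in $\Gamma$ (resp. $\beta$), edges being resistors of resistance equal to length. If $\Gamma-e_i$ (interior of $e_i$ deleted) is connected, $R_i$ is the effective resistance between $p_i,q_i$ in $\Gamma-e_i$, $R_{a_i,p}=\hat j_{p_i}(p,q_i)$, $R_{b_i,p}=\hat j_{q_i}(p,p_i)$ with $\hat j_z(x,y)$ the voltage function of $\Gamma-e_i$ (potential at $x$ when unit current enters at $y$ and exits at $z$, potential $0$ at $z$), so $R_{a_i,p}+R_{b_i,p}=R_i$. If $e_i$ is a bridge, $R_{a_i,p}=0,R_{b_i,p}=R_i$ when $p$ is in the component of $\Gamma-e_i$ containing $p_i$, and $R_{a_i,p}=R_i,R_{b_i,p}=0$ otherwise, and every expression involving $R_i$ is interpreted as its limit as $R_i\to\infty$. $\overline\Gamma_i$ is obtained by contracting $e_i$ to a point (identifying $p_i$ and $q_i$), with vertex set the image of $V(\Gamma)$, and $\bar p_i$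 denotes the vertex into which $p_i$ is contracted; $p$ also denotes its image in $\overline\Gamma_i$. *)

From HB Require Import structures.
From mathcomp Require Import all_boot all_order all_algebra.
From Stdlib Require Import ClassicalEpsilon.
Set Implicit Arguments. Unset Strict Implicit. Unset Printing Implicit Defensive.
Import Order.TTheory GRing.Theory Num.Theory.
Local Open Scope ring_scope.

(* A metrized graph is modelled combinatorially: a finite vertex type V,
   a finite edge type E (multiple edges and self-loops allowed), endpoint maps
   src dst : E -> V and edge lengths len : E -> R (positive).  Since every
   point used in the statement is a vertex, all resistances are between
   vertices, and the resistance between vertices only depends on this data. *)

Section Network.
Variables (R : realFieldType) (V E : finType) (src dst : E -> V) (len : E -> R).

Definition adjG : rel V :=
  fun x y => [exists e, ((src e == x) && (dst e == y)) || ((dst e == x) && (src e == y))].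

Definition connectedG : bool := [forall x : V, forall y : V, connect adjG x y].

(* net current flowing out of vertex w for the potential f
   (edge e is a resistor of resistance len e) *)
Definition outflow (f : V -> R) (w : V) : R :=
  \sum_(e : E) ((if src e == w then (f w - f (dst e)) / len e else 0)
              + (if dst e == w then (f w - f (src e)) / len e else 0)).

(* f is the voltage function j_z(., y): unit current enters at y, exits at z,
   potential 0 at z *)
Definition is_voltage (z y : V) (f : V -> R) : Prop :=
  f z = 0 /\ forall w, outflow f w = (w == y)%:R - (w == z)%:R.

(* j_z(x,y); on a connected network with positive lengths the solution exists
   and is unique, so this choice is canonical. *)
Definition voltage (z y : V) : V -> R :=
  match excluded_middle_informative (exists f, is_voltage z y f) with
  | left H => proj1_sig (constructive_indefinite_description _ H)
  | right _ => fun _ => 0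
  end.

Definition jz (z x y : V) : R := voltage z y x.

Definition eff_res (x y : V) : R := jz y x x.

End Network.

Definition del_edges (E : finType) (e : E) := {e' : E | e' != e}.

Definition del_end (V E : finType) (e : E) (s : E -> V) : del_edges e -> V :=
  fun e' => s (val e').

Definition del_len (R : Type) (E : finType) (e : E) (len : E -> R) : del_edges e -> R :=
  fun e' => len (val e').

(* ---- contraction of an edge with endpoints p q: identify q with p ---- *)
Definition cvert (V : finType) (p q : V) := {x : V | (x != q) || (p == q)}.

Lemma cvert_p (V : finType) (p q : V) : (p != q) || (p == q).
Proof. by case: (p == q). Qed.

Definition cmap (V : finType) (p q : V) (x : V) : cvert p q :=
  insubd (exist _ p (cvert_p p q) : cvert p q) x.

Definition con_end (V E : finType) (e : E) (p q : V) (s : E -> V)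
  : del_edges e -> cvert p q := fun e' => cmap p q (s (val e')).

Arguments del_end [V E] e s _.
Arguments del_len [R E] e len _.
Arguments con_end [V E] e p q s _.

From mathcomp Require Import all_boot all_order all_algebra.
From mathcomp Require Import ring lra.
From Stdlib Require Import ClassicalEpsilon.
Set Implicit Arguments. Unset Strict Implicit. Unset Printing Implicit Defensive.
Import Order.TTheory GRing.Theory Num.Theory.
Local Open Scope ring_scope.

(* On a connected network a harmonic function
   has zero energy by Green's identity, hence is constant; so voltages are unique, and the grounded
   Laplacian is invertible, so they exist.

   If e_i is not a bridge, let phi = j_{q_i}(., p_i) and psi = j_{q_i}(., p) in Gamma - e_i.  Adding
   e_i back only adds the current (f(p_i) - f(q_i)) / L_i between its ends, so the voltages of
   Gamma from p to p_i and to q_i are affine combinations of phi and psi.  Moreover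
   psi - (phi(p) / R_i) phi vanishes at p_i and q_i (reciprocity: psi(p_i) = phi(p)), so it descends
   to the voltage of the contracted graph.  With R_{a_i,p} + R_{b_i,p} = R_i the identity becomes
   an identity of rational functions in L_i, R_i, phi(p) and psi(p).

   If e_i is a bridge, the voltage of the contracted graph lifted to Gamma is the voltage from p
   to the end of e_i on the side of p; adding L_i on the other side gives the voltage to the far
   end. *)

Section Network.
Variables (R : realFieldType) (V E : finType) (src dst : E -> V) (len : E -> R).

Local Notation out := (outflow src dst len).

Lemma sum_mul_eq (G : V -> R) y : \sum_w G w * (w == y)%:R = G y.
Proof.
rewrite (bigD1 y) //= eqxx mulr1 big1 ?addr0 // => w /negbTE ->; exact: mulr0.
Qed.

Lemma sum_eq1 (y : V) : \sum_w ((w == y)%:R : R) = 1.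
Proof. by rewrite -[RHS](sum_mul_eq (fun=> 1) y); apply: eq_bigr => w _; rewrite mul1r. Qed.

Lemma sum_mul_outflowE (G f : V -> R) :
  \sum_w G w * out f w =
  \sum_e (G (src e) * (f (src e) - f (dst e)) + G (dst e) * (f (dst e) - f (src e))) / len e.
Proof.
rewrite /outflow; under eq_bigr do rewrite mulr_sumr.
rewrite exchange_big /=; apply: eq_bigr => e _.
under eq_bigr do rewrite mulrDr.
rewrite big_split /= mulrDl -!mulrA.
by congr (_ + _); [rewrite (bigD1 (src e)) | rewrite (bigD1 (dst e))] => //=;
  rewrite eqxx big1 ?addr0 // => w; rewrite eq_sym => /negbTE ->; rewrite mulr0.
Qed.

Lemma green (G f : V -> R) :
  \sum_w G w * out f w =
  \sum_e (G (src e) - G (dst e)) * (f (src e) - f (dst e)) / len e.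
Proof. by rewrite sum_mul_outflowE; apply: eq_bigr => e _; congr (_ / _); ring. Qed.

Lemma green_sym (f g : V -> R) : \sum_w f w * out g w = \sum_w g w * out f w.
Proof. by rewrite !green; apply: eq_bigr => e _; congr (_ / _); ring. Qed.

Lemma eq_outflow (f g : V -> R) : f =1 g -> out f =1 out g.
Proof. by move=> fg w; apply: eq_bigr => e _; rewrite !fg. Qed.

Lemma outflow_lin (k1 k2 k3 : R) (f g : V -> R) w :
  out (fun v => k1 * f v + k2 * g v + k3) w = k1 * out f w + k2 * out g w.
Proof.
rewrite /outflow !mulr_sumr -big_split; apply: eq_bigr => e _ /=.
by do 2 case: ifP => _; rewrite ?mulr0 ?addr0; ring.
Qed.

Lemma outflow_scale k (f : V -> R) w : out (fun v => k * f v) w = k * out f w.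
Proof.
by rewrite -[RHS]addr0 -(mul0r (out f w)) -(outflow_lin k 0 0); apply: (eq_outflow _ w) => v; ring.
Qed.

Lemma outflow_sum (I : Type) (s : seq I) (G : I -> V -> R) w :
  out (fun v => \sum_(i <- s) G i v) w = \sum_(i <- s) out (G i) w.
Proof.
elim: s => [|i s IH].
  rewrite big_nil -[RHS](mul0r (out (fun=> 0) w)) -outflow_scale.
  by apply: (eq_outflow _ w) => v; rewrite big_nil mul0r.
rewrite big_cons -IH.
transitivity (out (fun v => 1 * G i v + 1 * \sum_(j <- s) G j v + 0) w).
  by apply: eq_outflow => v; rewrite big_cons; ring.
by rewrite outflow_lin !mul1r.
Qed.

Lemma sum_outflow (f : V -> R) : \sum_w out f w = 0.
Proof.
rewrite -(eq_bigr _ (fun w _ => mul1r (out f w))) green.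
by rewrite big1 // => e _; rewrite subrr !mul0r.
Qed.

Section EdgeClosed.
Variable T : pred V.
Hypothesis T_closed : forall e, T (src e) = T (dst e).

Lemma outflow_closed w : out (fun v => (T v)%:R) w = 0.
Proof.
rewrite /outflow big1 // => e _.
by do 2 case: eqP => [<-|_]; rewrite ?T_closed ?subrr ?mul0r ?addr0.
Qed.

Lemma sum_closed_outflow (f : V -> R) : \sum_w (T w)%:R * out f w = 0.
Proof. by rewrite green big1 // => e _; rewrite T_closed subrr !mul0r. Qed.

End EdgeClosed.

Definition energy (f : V -> R) : R :=
  \sum_e (f (src e) - f (dst e)) ^+ 2 / len e.

Lemma energyE (f : V -> R) : energy f = \sum_w f w * out f w.
Proof. by rewrite green; apply: eq_bigr => e _; rewrite expr2. Qed.

Hypothesis len_gt0 : forall e, 0 < len e.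

Lemma energy_ge0 f : 0 <= energy f.
Proof. by rewrite sumr_ge0 // => e _; rewrite divr_ge0 ?sqr_ge0 ?ltW. Qed.

Lemma energy_eq0 f : energy f = 0 -> forall e, f (src e) = f (dst e).
Proof.
move/eqP; rewrite psumr_eq0 => [/allP E0 e|e _]; last first.
  by rewrite divr_ge0 ?sqr_ge0 ?ltW.
move: (E0 e (mem_index_enum e)); rewrite mulf_eq0 invr_eq0 (gt_eqF (len_gt0 e)) orbF.
by rewrite sqrf_eq0 subr_eq0 => /eqP.
Qed.

Lemma adjG_sym : symmetric (adjG src dst).
Proof.
by move=> x y; apply/existsP/existsP => -[e ex]; exists e;
  case/orP: ex => /andP[-> ->]; rewrite ?orbT.
Qed.

Hypothesis connected : connectedG src dst.

Lemma edge_const (h : V -> R) : (forall e, h (src e) = h (dst e)) -> forall x y, h x = h y.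
Proof.
move=> h_edge x y; have: connect (adjG src dst) x y by move/forallP/(_ x)/forallP: connected.
case/connectP => p; elim: p x => [|z p IH] x /=; first by move=> _ ->.
case/andP => /existsP[e /orP[]] /andP[/eqP <- /eqP <-] p_path y_last;
  by rewrite -(IH _ p_path y_last) ?h_edge.
Qed.

Lemma harmonic_const (h : V -> R) : out h =1 (fun=> 0) -> forall x y, h x = h y.
Proof.
move=> h_harm; apply/edge_const/energy_eq0.
by rewrite energyE big1 // => w _; rewrite h_harm mulr0.
Qed.

Lemma is_voltage_uniq z y f g :
  is_voltage src dst len z y f -> is_voltage src dst len z y g -> f =1 g.
Proof.
move=> [fz f_out] [gz g_out] x.
have h_harm : out (fun v => 1 * f v + (-1) * g v + 0) =1 (fun=> 0).
  by move=> w; rewrite outflow_lin f_out g_out; ring.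
by move: (harmonic_const h_harm x z); rewrite fz gz; lra.
Qed.

Definition grounded_outflow z (f : V -> R) (w : V) : R :=
  if w == z then f z else out f w.

Lemma grounded_outflow_eq0 z f : grounded_outflow z f =1 (fun=> 0) -> f =1 (fun=> 0).
Proof.
move=> Gf0 x.
have fz : f z = 0 by move: (Gf0 z); rewrite /grounded_outflow eqxx.
have out_ne : forall w, w != z -> out f w = 0.
  by move=> w /negbTE wz; move: (Gf0 w); rewrite /grounded_outflow wz.
have out0 : out f =1 (fun=> 0).
  move=> w; case: (eqVneq w z) => [->|]; last exact: out_ne.
  by move: (sum_outflow f); rewrite (bigD1 z) //= big1 ?addr0 // => u /out_ne.
by rewrite (harmonic_const out0 x z).
Qed.

Definition fun_of_row (v : 'rV[R]_#|V|) (w : V) : R := v 0 (enum_rank w).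

Definition grounded_mx z : 'M[R]_#|V| :=
  \matrix_(i, j) grounded_outflow z (fun w => (w == enum_val i)%:R) (enum_val j).

Lemma fun_of_rowE v : fun_of_row v =1 (fun w => \sum_i v 0 i * (w == enum_val i)%:R).
Proof.
move=> w; rewrite (bigD1 (enum_rank w)) //= enum_rankK eqxx mulr1 big1 ?addr0 // => i.
by case: (w =P enum_val i) => [->|_]; rewrite ?mulr0 // enum_valK eqxx.
Qed.

Lemma mul_grounded_mx z v j :
  (v *m grounded_mx z) 0 j = grounded_outflow z (fun_of_row v) (enum_val j).
Proof.
rewrite mxE; under eq_bigr do rewrite mxE.
rewrite /grounded_outflow; case: ifP => _; first by rewrite fun_of_rowE.
by rewrite (eq_outflow (fun_of_rowE v)) outflow_sum; apply: eq_bigr => i _; rewrite outflow_scale.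
Qed.

Lemma grounded_mx_unit z : grounded_mx z \in unitmx.
Proof.
rewrite unitmxE unitfE; apply/det0P => -[v v_neq0 vA]; apply/negP: v_neq0; rewrite negbK.
have v0 : fun_of_row v =1 (fun=> 0).
  by apply: (@grounded_outflow_eq0 z) => w; rewrite -[w]enum_rankK -mul_grounded_mx vA mxE.
by apply/eqP/rowP => i; rewrite !mxE -[i]enum_valK; exact: v0.
Qed.

Lemma grounded_outflow_onto z (g : V -> R) : exists f, grounded_outflow z f =1 g.
Proof.
exists (fun_of_row (\row_j g (enum_val j) *m invmx (grounded_mx z))) => w.
by rewrite -[w]enum_rankK -mul_grounded_mx mulmxKV ?grounded_mx_unit // mxE.
Qed.

Lemma voltage_exists z y : exists f, is_voltage src dst len z y f.
Proof.
pose g w : R := if w == z then 0 else (w == y)%:R - (w == z)%:R.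
have [f Gf] := grounded_outflow_onto z g.
have fz : f z = 0 by move: (Gf z); rewrite /grounded_outflow /g eqxx.
have out_ne : forall w, w != z -> out f w = (w == y)%:R - (w == z)%:R.
  by move=> w /negbTE wz; move: (Gf w); rewrite /grounded_outflow /g wz.
exists f; split=> // w; case: (eqVneq w z) => [->|wz]; last by rewrite out_ne // (negbTE wz).
have : \sum_w (out f w - ((w == y)%:R - (w == z)%:R)) = 0.
  by rewrite sumrB sum_outflow sumrB !sum_eq1 !subrr.
rewrite (bigD1 z) //= big1 ?addr0 => [|u uz]; last by rewrite out_ne ?subrr.
by rewrite eqxx => /eqP; rewrite subr_eq0 => /eqP.
Qed.

Lemma is_voltage_voltage z y : is_voltage src dst len z y (voltage src dst len z y).
Proof.
rewrite /voltage; case: excluded_middle_informative => [ex|]; last by case; exact: voltage_exists.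
exact: proj2_sig (constructive_indefinite_description _ ex).
Qed.

Lemma jz_voltage z y f : is_voltage src dst len z y f -> forall x, jz src dst len z x y = f x.
Proof. exact: is_voltage_uniq (is_voltage_voltage z y). Qed.

Lemma jz_sym z x y : jz src dst len z x y = jz src dst len z y x.
Proof.
have [fz f_out] := is_voltage_voltage z y; have [gz g_out] := is_voltage_voltage z x.
have := green_sym (voltage src dst len z y) (voltage src dst len z x).
under eq_bigr do rewrite g_out mulrBr.
under [in RHS]eq_bigr do rewrite f_out mulrBr.
by rewrite !sumrB !sum_mul_eq fz gz !subr0.
Qed.

Lemma jz_add_swap a b x : jz src dst len a x b + jz src dst len b x a = eff_res src dst len a b.
Proof.
have [fa f_out] := is_voltage_voltage a b; have [gb g_out] := is_voltage_voltage b a.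
have h_harm : out (fun v => 1 * voltage src dst len a b v + 1 * voltage src dst len b a v + 0)
    =1 (fun=> 0).
  by move=> w; rewrite outflow_lin f_out g_out; ring.
by move: (harmonic_const h_harm x a); rewrite /eff_res /jz fa; lra.
Qed.

Lemma eff_res_energy y z : eff_res src dst len y z = energy (voltage src dst len z y).
Proof.
have [fz f_out] := is_voltage_voltage z y.
rewrite energyE; under eq_bigr do rewrite f_out mulrBr.
by rewrite sumrB !sum_mul_eq fz subr0.
Qed.

Lemma eff_res_ge0 y z : 0 <= eff_res src dst len y z.
Proof. by rewrite eff_res_energy energy_ge0. Qed.

Lemma eff_res_eq0 y z : eff_res src dst len y z = 0 -> forall x, jz src dst len z x y = 0.
Proof.
rewrite eff_res_energy => /energy_eq0 f_edge x.
by rewrite /jz (edge_const f_edge x z); case: (is_voltage_voltage z y).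
Qed.

End Network.

Section Edge.
Variables (R : realFieldType) (V E : finType) (src dst : E -> V) (len : E -> R) (e : E).
Hypothesis len_gt0 : forall e, 0 < len e.
Hypothesis connected : connectedG src dst.

Local Notation a := (src e).
Local Notation b := (dst e).
Local Notation L := (len e).
Local Notation out := (outflow src dst len).
Local Notation dsrc := (del_end e src).
Local Notation ddst := (del_end e dst).
Local Notation dlen := (del_len e len).
Local Notation out' := (outflow dsrc ddst dlen).
Local Notation cm := (cmap a b).
Local Notation csrc := (con_end e a b src).
Local Notation cdst := (con_end e a b dst).
Local Notation outc := (outflow csrc cdst dlen).
Local Notation lift Wb := (fun w => Wb (cm w)).

Lemma del_len_gt0 e' : 0 < dlen e'.
Proof. exact: len_gt0. Qed.

Lemma outflow_del_edge (f : V -> R) w :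
  out f w = out' f w + ((w == a)%:R - (w == b)%:R) * (f a - f b) / L.
Proof.
rewrite /outflow (bigD1 e) //= addrC; congr (_ + _); last first.
  by rewrite ![w == _]eq_sym; do 2 case: eqP => [<-|_] /=;
    rewrite ?subrr ?mul0r ?addr0 ?add0r ?subr0 ?sub0r ?mul1r //; ring.
rewrite (reindex_omap (val : del_edges e -> E) insub) => [|i ie]; last by rewrite insubT.
by apply: eq_bigl => -[i ie] /=; rewrite insubT ie /=; apply/eqP; congr Some; exact: val_inj.
Qed.

Lemma val_cmap w : val (cm w) = if w == b then a else w.
Proof. by rewrite val_insubd /=; case: (eqVneq w b) => [->|] //=; case: eqP. Qed.

Lemma cmap_dst : cm b = cm a.
Proof. by apply: val_inj; rewrite !val_cmap eqxx; case: eqP. Qed.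

Lemma cmap_val (u : cvert a b) : cm (val u) = u.
Proof. exact: valKd. Qed.

Lemma eq_cmap u w : (cm u == cm w) = (u == w) || (u \in [:: a; b]) && (w \in [:: a; b]).
Proof.
rewrite -(inj_eq val_inj) !val_cmap !inE.
case: (eqVneq u b) => [->|ub]; case: (eqVneq w b) => [->|wb] /=;
  rewrite ?eqxx ?orbT ?andbT ?orbF //; first by rewrite (negbTE ub).
by case: (u =P a) => [->|_]; rewrite ?andbF ?orbF // ?andbT [w == _]eq_sym ?orbb.
Qed.

Lemma outflow_contract (Wb : cvert a b -> R) vb :
  outc Wb vb = \sum_w (cm w == vb)%:R * out' (lift Wb) w.
Proof.
rewrite sum_mul_outflowE /outflow; apply: eq_bigr => e' _.
rewrite /con_end /del_end /del_len.
by do 2 case: eqP => [<-|_]; rewrite /= ?mul1r ?mul0r ?add0r ?addr0 ?mulrDl ?mul0r.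
Qed.

Lemma outflow_lift_off_ends Wb w :
  w \notin [:: a; b] -> out' (lift Wb) w = outc Wb (cm w).
Proof.
move=> w_off; rewrite outflow_contract (bigD1 w) //= eqxx mul1r big1 ?addr0 // => u uw.
by rewrite eq_cmap (negbTE uw) (negbTE w_off) andbF mul0r.
Qed.

Lemma outflow_lift_ends Wb :
  a != b -> out' (lift Wb) a + out' (lift Wb) b = outc Wb (cm a).
Proof.
move=> ab; rewrite outflow_contract (bigD1 a) //= (bigD1 b) 1?eq_sym //=.
rewrite cmap_dst eqxx !mul1r big1 ?addr0 ?addrA // => u /andP[ub ua].
by rewrite eq_cmap !inE (negbTE ua) (negbTE ub) mul0r.
Qed.

Lemma adj_contract u w : adjG src dst u w -> connect (adjG csrc cdst) (cm u) (cm w).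
Proof.
case/existsP => e0 He0; case: (eqVneq e0 e) => [e0e|e0e].
  by rewrite e0e in He0; case/orP: He0 => /andP[/eqP<- /eqP<-]; rewrite cmap_dst.
apply: connect1; apply/existsP; exists (exist _ e0 e0e : del_edges e).
by rewrite /con_end /=; case/orP: He0 => /andP[/eqP<- /eqP<-]; rewrite !eqxx ?orbT.
Qed.

Lemma connected_contract : connectedG csrc cdst.
Proof.
apply/forallP => ub; apply/forallP => vb; rewrite -(cmap_val ub) -(cmap_val vb).
have : connect (adjG src dst) (val ub) (val vb) by move/forallP/(_ (val ub))/forallP: connected.
case/connectP => p; elim: p (val ub) => [|y p IH] u /=; first by move=> _ ->.
by case/andP => /adj_contract uy p_path y_last; apply: connect_trans uy (IH _ p_path y_last).
Qed.

Section NonBridge.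
Hypothesis del_connected : connectedG dsrc ddst.
Variable x : V.

Local Notation phi := (voltage dsrc ddst dlen b a).
Local Notation psi := (voltage dsrc ddst dlen b x).
Local Notation Rd := (eff_res dsrc ddst dlen a b).
Local Notation s := (jz dsrc ddst dlen b x a).
Local Notation P := (eff_res dsrc ddst dlen x b).

Let del_voltage z y := is_voltage_voltage del_len_gt0 del_connected z y.
Let psi_a : psi a = s := jz_sym del_len_gt0 del_connected b a x.

Lemma L_add_Rd_neq0 : L + Rd != 0.
Proof. by rewrite gt_eqF // (lt_le_trans (len_gt0 e)) // lerDl (eff_res_ge0 del_len_gt0). Qed.

Lemma outflow_nonbridge k1 k2 k3 w :
  out (fun v => k1 * phi v + k2 * psi v + k3) w =
  k1 * ((w == a)%:R - (w == b)%:R) + k2 * ((w == x)%:R - (w == b)%:R)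
  + ((w == a)%:R - (w == b)%:R) * (k1 * Rd + k2 * s) / L.
Proof.
have [phib phi_out] := del_voltage b a; have [psib psi_out] := del_voltage b x.
rewrite outflow_del_edge outflow_lin phi_out psi_out phib psib psi_a.
by congr (_ + _); congr (_ * _ / _); rewrite /eff_res /jz; ring.
Qed.

Lemma eff_res_src_nonbridge :
  eff_res src dst len a x = P + (L + s) * (Rd - s) / (L + Rd) - s.
Proof.
pose c := (L + s) / (L + Rd).
pose f v := c * phi v + (-1) * psi v + (P - c * s).
rewrite /eff_res (jz_voltage len_gt0 connected (f := f)) /f.
  by rewrite psi_a /c /eff_res /jz; field; exact: L_add_Rd_neq0.
split; first by rewrite /eff_res /jz /c; ring.
move=> w; rewrite outflow_nonbridge /c; field.
by rewrite L_add_Rd_neq0 gt_eqF.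
Qed.

Lemma eff_res_dst_nonbridge : eff_res src dst len b x = P - s ^+ 2 / (L + Rd).
Proof.
pose c := s / (L + Rd).
pose f v := c * phi v + (-1) * psi v + (P - c * s).
rewrite /eff_res (jz_voltage len_gt0 connected (f := f)) /f.
  have [phib _] := del_voltage b a; have [psib _] := del_voltage b x.
  by rewrite phib psib /c /eff_res /jz; field; exact: L_add_Rd_neq0.
split; first by rewrite /eff_res /jz /c; ring.
move=> w; rewrite outflow_nonbridge /c; field.
by rewrite L_add_Rd_neq0 gt_eqF.
Qed.

Lemma eff_res_contract_nonbridge :
  eff_res csrc cdst dlen (cm x) (cm a) = P - s ^+ 2 / Rd.
Proof.
have [phib phi_out] := del_voltage b a; have [psib psi_out] := del_voltage b x.
have s_Rd : s = s / Rd * Rd.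
  have [Rd0|] := eqVneq Rd 0; last by move=> ?; rewrite divfK.
  by rewrite (eff_res_eq0 del_len_gt0 del_connected Rd0) !mul0r.
pose Wb (u : cvert a b) := psi (val u) - s / Rd * phi (val u).
have Wb_lift v : Wb (cm v) = 1 * psi v + (- (s / Rd)) * phi v + 0.
  rewrite /Wb val_cmap; case: eqP => [->|_]; last by ring.
  by rewrite phib psib psi_a -[phi a]/Rd {1}s_Rd; ring.
rewrite /eff_res (jz_voltage del_len_gt0 connected_contract (f := Wb)).
  by rewrite Wb_lift /eff_res /jz; ring.
split=> [|u]; first by rewrite -cmap_dst Wb_lift phib psib; ring.
rewrite outflow_contract (eq_bigr (fun w => (cm w == u)%:R * (w == x)%:R
     - (cm w == u)%:R * (w == b)%:R - s / Rd * ((cm w == u)%:R * (w == a)%:R)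
     + s / Rd * ((cm w == u)%:R * (w == b)%:R))) => [|w _]; last first.
  by rewrite (eq_outflow _ _ _ Wb_lift) outflow_lin phi_out psi_out; ring.
by rewrite !big_split /= !sumrN -!mulr_sumr !sum_mul_eq cmap_dst ![u == _]eq_sym; ring.
Qed.

Lemma eff_res_nonbridge :
  eff_res src dst len a x + eff_res src dst len b x =
  2 * eff_res csrc cdst dlen (cm x) (cm a) + L * Rd / (L + Rd)
  - 2 * (L * jz dsrc ddst dlen a x b * s / (Rd * (L + Rd))).
Proof.
rewrite eff_res_src_nonbridge eff_res_dst_nonbridge eff_res_contract_nonbridge.
have -> : jz dsrc ddst dlen a x b = Rd - s.
  by rewrite -(jz_add_swap del_len_gt0 del_connected a b x); ring.
(* R_i = 0 only for a self-loop; then R_{b_i,p} = 0 too and both sides agree because x / 0 = 0. *)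
have [Rd0|Rd_neq0] := eqVneq Rd 0.
  rewrite Rd0 (eff_res_eq0 del_len_gt0 del_connected Rd0).
  by rewrite !(mulr0, mul0r, addr0, invr0, subr0, sub0r, expr0n); ring.
by field; rewrite Rd_neq0 L_add_Rd_neq0.
Qed.

End NonBridge.

Section Bridge.
Hypothesis bridge : ~~ connectedG dsrc ddst.
Variable x : V.

Local Notation side := (connect (adjG dsrc ddst) x).
Local Notation W := (lift (voltage csrc cdst dlen (cm a) (cm x))).

Lemma side_closed e' : side (dsrc e') = side (ddst e').
Proof.
apply: (connect_closed (sym_connect_sym (adjG_sym dsrc ddst))).
by apply/existsP; exists e'; rewrite !eqxx.
Qed.

Lemma side_ends : side a != side b.
Proof.
apply: contra bridge => /eqP side_ab.
have side_all w : side w.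
  have side_closedG : closed (adjG src dst) side.
    move=> u v /existsP[e0 e0uv]; rewrite -!topredE /=.
    have [e0e|e0e] := eqVneq e0 e.
      by rewrite e0e in e0uv; case/orP: e0uv => /andP[/eqP<- /eqP<-].
    move: (side_closed (exist _ e0 e0e)); rewrite /del_end /=.
    by case/orP: e0uv => /andP[/eqP-> /eqP->].
  have xw : connect (adjG src dst) x w by move/forallP/(_ x)/forallP: connected.
  by move: (closed_connect side_closedG xw); rewrite -!topredE /= connect0 => <-.
apply/forallP => u; apply/forallP => v.
by apply: connect_trans (side_all v); rewrite (sym_connect_sym (adjG_sym dsrc ddst)).
Qed.

Let co_side_closed e' : (predC side) (dsrc e') = (predC side) (ddst e').
Proof. by rewrite /= side_closed. Qed.

Let W_a : W a = 0 := proj1 (is_voltage_voltage del_len_gt0 connected_contract (cm a) (cm x)).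

Let W_b : W b = 0.
Proof. by rewrite /= cmap_dst W_a. Qed.

Section Ends.
Variables c d : V.
Hypothesis ends_cd : (c == a) && (d == b) || (c == b) && (d == a).
Hypothesis side_c : side c.
Hypothesis side_d : ~~ side d.

Let ends_mem w : (w \in [:: a; b]) = (w \in [:: c; d]).
Proof. by rewrite !inE; case/orP: ends_cd => /andP[/eqP-> /eqP->]; rewrite // orbC. Qed.

Let x_neq_d : x != d.
Proof. by apply: contraNneq side_d => <-; exact: connect0. Qed.

Lemma outflow_lift_bridge w : out' W w = (w == x)%:R - (w == c)%:R.
Proof.
have [_ Wout] := is_voltage_voltage del_len_gt0 connected_contract (cm a) (cm x).
have ab : a != b by apply: contraNneq side_ends => ->.
have off v : v \notin [:: c; d] -> out' W v = (v == x)%:R.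
  rewrite -ends_mem => v_off; rewrite outflow_lift_off_ends // Wout !eq_cmap (negbTE v_off) /=.
  by move: v_off; rewrite !inE negb_or => /andP[/negbTE-> _]; rewrite orbF subr0.
have out_d : out' W d = 0.
  (* the side of Gamma - e_i not containing x has zero net outflow and meets e_i only in d *)
  move: (sum_closed_outflow dlen co_side_closed W).
  rewrite (bigD1 d) //= side_d mul1r big1 ?addr0 //.
  move=> v vd; have [side_v|side_v] := boolP (side v); first by rewrite mul0r.
  have vc : v != c by apply: contraNneq side_v => ->.
  have vx : v != x by apply: contraNneq side_v => ->; exact: connect0.
  by rewrite off ?inE ?negb_or ?vc ?vd // (negbTE vx) mulr0.
have out_c : out' W c = (c == x)%:R - 1.
  move: (outflow_lift_ends (voltage csrc cdst dlen (cm a) (cm x)) ab).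
  rewrite Wout eqxx eq_cmap mem_head ends_mem !inE (negbTE x_neq_d) orbF.
  move: x_neq_d out_d; case/orP: ends_cd => /andP[/eqP-> /eqP->] xd ->;
    by rewrite ?addr0 ?add0r andTb ![_ == x]eq_sym ?(negbTE xd) ?orbb ?orFb => ->.
have [->|wc] := eqVneq w c; first by rewrite out_c eq_sym.
have [->|wd] := eqVneq w d; first by rewrite out_d eq_sym (negbTE x_neq_d) subrr.
by rewrite off ?inE ?negb_or ?wc ?wd // subr0.
Qed.

Let W_c : W c = 0.
Proof. by case/orP: ends_cd => /andP[/eqP-> _]. Qed.

Lemma eff_res_bridge_near : eff_res src dst len c x = W x.
Proof.
rewrite /eff_res (jz_voltage len_gt0 connected (f := fun v => (-1) * W v + 0 * W v + W x)).
  by rewrite W_c; ring.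
split=> [|w]; first by ring.
by rewrite outflow_del_edge outflow_lin outflow_lift_bridge W_a W_b; ring.
Qed.

Lemma eff_res_bridge_far : eff_res src dst len d x = W x + L.
Proof.
pose I v : R := (~~ side v)%:R.
rewrite /eff_res (jz_voltage len_gt0 connected (f := fun v => (-1) * W v + L * I v + W x)).
  by rewrite /I side_d; case/orP: ends_cd => /andP[_ /eqP->]; rewrite ?W_a ?W_b /=; ring.
split=> [|w]; first by rewrite /I connect0 /=; ring.
rewrite outflow_del_edge outflow_lin outflow_lift_bridge (outflow_closed dlen co_side_closed).
rewrite /I W_a W_b; move: side_c side_d.
by case/orP: ends_cd => /andP[/eqP-> /eqP->] -> /negbTE -> /=; field; rewrite gt_eqF.
Qed.

End Ends.

Lemma eff_res_bridge :
  eff_res src dst len a x + eff_res src dst len b x =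
  2 * eff_res csrc cdst dlen (cm x) (cm a) + L.
Proof.
have -> : eff_res csrc cdst dlen (cm x) (cm a) = W x by [].
have [side_a|side_a] := boolP (side a).
  have side_b : ~~ side b by apply: contra side_ends => side_b; rewrite side_a side_b.
  rewrite (eff_res_bridge_near (d := b)) ?eqxx // (eff_res_bridge_far (c := a)) ?eqxx //; ring.
have side_b : side b by apply: contraR side_ends => side_b; rewrite (negbTE side_a) (negbTE side_b).
rewrite (eff_res_bridge_far (c := b)) ?eqxx ?orbT // (eff_res_bridge_near (d := a)) ?eqxx ?orbT //.
ring.
Qed.

End Bridge.

End Edge.

Theorem lemma3p1 (R : realFieldType) (V E : finType) (src dst : E -> V)
    (len : E -> R) (Hlen : forall e, 0 < len e) (Hconn : connectedG src dst)
    (p : V) (e : E) :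
  let pi := src e in
  let qi := dst e in
  let Li := len e in
  (* Gamma - e_i *)
  let dsrc := del_end e src in
  let ddst := del_end e dst in
  let dlen := del_len e len in
  (* contracted graph bar Gamma_i *)
  let csrc := con_end e pi qi src in
  let cdst := con_end e pi qi dst in
  let rbar := eff_res csrc cdst dlen (cmap pi qi p) (cmap pi qi pi) in
  eff_res src dst len pi p + eff_res src dst len qi p =
  if connectedG dsrc ddst then
    let Ri := eff_res dsrc ddst dlen pi qi in
    let Rap := jz dsrc ddst dlen pi p qi in
    let Rbp := jz dsrc ddst dlen qi p pi in
    2 * rbar + Li * Ri / (Li + Ri) - 2 * (Li * Rap * Rbp / (Ri * (Li + Ri)))
  else
    (* e_i is a bridge: limit R_i -> oo of the right-hand side *)
    2 * rbar + Li.
Proof.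
move=> pi qi Li dsrc ddst dlen csrc cdst rbar.
case: ifP => [del_connected|/negbT bridge].
  exact: eff_res_nonbridge.
exact: eff_res_bridge.
Qed.
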